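(* Let $T$ be a rooted tree with $n$ vertices and root $r$, and let $X_n$ be the number of descents $\mathrm{des}(T,w)$ of a labeling $w$ of $T$ chosen uniformly at random among all $n!$ labelings. Then \[\mathbb{E}(X_n)=\frac{n-1}{2}\qquad\text{and}\qquad \mathrm{Var}(X_n)=\frac{2d_r+\sum_{v\in V(T)} d_v^2}{12},\] where $d_v$ denotes the down-degree of the vertex $v$.
   Context: A labeling of a rooted tree $T$ with $n$ vertices is a bijection $w: V(T)\to\{1,\dots,n\}$. A vertex $v$ with parent $u$ is a descent of $(T,w)$ if $w(v)>w(u)$ (the root is never a descent); $\mathrm{des}(T,w)$ is the number of descents. The down-degree of a vertex is its number of children. *)

From HB Require Import structures.
From mathcomp Require Import all_boot all_order all_algebra all_fingroup.
Set Implicit Arguments. Unset Strict Implicit. Unset Printing Implicit Defensive.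
Import GRing.Theory Num.Theory.

Definition is_rooted_tree (n : nat) (par : 'I_n -> 'I_n) (r : 'I_n) : Prop :=
  par r = r /\ forall v : 'I_n, exists k : nat, iter k par v = r.

(* A labeling is a bijection V(T) -> {0,...,n-1} (order-isomorphic to {1..n}),
   i.e. a permutation of 'I_n. *)
Definition des (n : nat) (par : 'I_n -> 'I_n) (r : 'I_n) (w : {perm 'I_n}) : nat :=
  #|[set v : 'I_n | (v != r) && (w (par v) < w v)]|.

Definition downdeg (n : nat) (par : 'I_n -> 'I_n) (r : 'I_n) (v : 'I_n) : nat :=
  #|[set u : 'I_n | (u != r) && (par u == v)]|.

Local Open Scope ring_scope.

Definition des_mean (n : nat) (par : 'I_n -> 'I_n) (r : 'I_n) : rat :=
  (\sum_(w : {perm 'I_n}) (des par r w)%:R) / (n`!)%:R.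

Definition des_var (n : nat) (par : 'I_n -> 'I_n) (r : 'I_n) : rat :=
  (\sum_(w : {perm 'I_n}) ((des par r w)%:R - des_mean par r) ^+ 2) / (n`!)%:R.

From HB Require Import structures.
From mathcomp Require Import all_boot all_order all_algebra all_fingroup.
From mathcomp Require Import zify ring lra.
Import GRing.Theory Num.Theory.
Local Open Scope ring_scope.

(* Write des(w) = (n - 1)/2 + sum_{v <> r} X_v(w), where
   X_v(w) = [w(par v) < w(v)] - 1/2 is the centred descent indicator of the
   edge (par v, v).  Reindexing the sum over labelings by a transposition
   swapping the two ends of an edge negates X_v, so E X_v = 0 and E X_u X_v = 0
   for vertex-disjoint edges, while E X_v^2 = 1/4.  For two edges sharing an
   endpoint, the transpositions permute the three terms of an identity on three
   distinct values whose sum is 1/4, giving +1/12 for siblings and -1/12 for a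
   path.  Counting these pairs yields (2 d_r + sum_v d_v^2)/12. *)

Definition centered_lt (x y : nat) : rat := (x < y)%N%:R - 1 / 2.

Lemma centered_ltC x y : x != y -> centered_lt y x = - centered_lt x y.
Proof.
by move=> /eqP neq_xy; rewrite /centered_lt; case: (ltngtP x y) => // _; field.
Qed.

Lemma centered_lt_sqr x y : centered_lt x y ^+ 2 = 1 / 4.
Proof. by rewrite /centered_lt; case: (x < y)%N => /=; field. Qed.

Lemma centered_lt_cycle3 x y z : x != y -> x != z -> y != z ->
  centered_lt x y * centered_lt x z + centered_lt y x * centered_lt y z
    + centered_lt z y * centered_lt z x = 1 / 4.
Proof.
move=> /eqP ? /eqP ? /eqP ?; rewrite /centered_lt.
by case: (ltngtP x y); case: (ltngtP x z); case: (ltngtP y z) => // *;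
   (lia || field).
Qed.

Lemma sum_perm_tperm_anti {T : finType} {R : numDomainType} (a b : T)
    (F : {perm T} -> R) :
  (forall w, F (tperm a b * w)%g = - F w) -> \sum_w F w = 0.
Proof.
move=> FN; have /eqP : (\sum_w F w) *+ 2 = 0.
  rewrite mulr2n {1}(reindex_inj (mulgI (tperm a b))) /=.
  by under eq_bigr do rewrite FN; rewrite sumrN addNr.
by rewrite mulrn_eq0 => /eqP.
Qed.

Section PermSums.
Variable n : nat.
Implicit Types (a b c d : 'I_n) (w : {perm 'I_n}).

Lemma perm_val_neq w a b : a != b -> (w a : nat) != w b.
Proof. by rewrite (inj_eq val_inj) (inj_eq perm_inj). Qed.

Lemma sum_perm_centered_lt a b : a != b ->
  \sum_(w : {perm 'I_n}) centered_lt (w a) (w b) = 0.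
Proof.
move=> ab; apply: (sum_perm_tperm_anti a b) => w.
by rewrite !permM tpermL tpermR centered_ltC // perm_val_neq.
Qed.

Lemma sum_perm_centered_lt_disjoint a b c d :
  a != b -> a != c -> b != c -> a != d -> b != d ->
  \sum_(w : {perm 'I_n}) centered_lt (w a) (w b) * centered_lt (w c) (w d) = 0.
Proof.
move=> ab ac bc ad bd; apply: (sum_perm_tperm_anti a b) => w.
by rewrite !permM tpermL tpermR !tpermD // centered_ltC ?mulNr // perm_val_neq.
Qed.

Lemma sum_perm_centered_lt_common a b c : a != b -> a != c -> b != c ->
  \sum_(w : {perm 'I_n}) centered_lt (w a) (w b) * centered_lt (w a) (w c)
  = n`!%:R / 12.
Proof.
(* (a b) and (a c) permute the three terms of centered_lt_cycle3. *)
move=> ab ac bc; set S := \sum_(w : {perm 'I_n}) _.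
have swap_ab :
    S = \sum_(w : {perm 'I_n}) centered_lt (w b) (w a) * centered_lt (w b) (w c).
  rewrite /S (reindex_inj (mulgI (tperm a b))); apply: eq_bigr => w _.
  by rewrite !permM tpermL tpermR tpermD.
have swap_ac :
    S = \sum_(w : {perm 'I_n}) centered_lt (w c) (w b) * centered_lt (w c) (w a).
  rewrite /S (reindex_inj (mulgI (tperm a c))); apply: eq_bigr => w _.
  by rewrite !permM tpermL tpermR tpermD // eq_sym.
have : S + S + S = \sum_(w : {perm 'I_n}) 1 / 4.
  rewrite {2}swap_ab {2}swap_ac -!big_split /=; apply: eq_bigr => w _.
  by rewrite centered_lt_cycle3 // perm_val_neq.
by rewrite sumr_const card_Sn -mulr_natl; lra.
Qed.

End PermSums.

Lemma card_set_andE {R : pzSemiRingType} (T : finType) (P Q : pred T) :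
  #|[set x | P x && Q x]|%:R = \sum_(x | P x) (Q x)%:R :> R.
Proof.
rewrite -sum1_card natr_sum big_mkcond [RHS]big_mkcond; apply: eq_bigr => x _.
by rewrite in_set; case: (P x); case: (Q x).
Qed.

Lemma sum_eq_cond {R : pzSemiRingType} (T : finType) (P : pred T) (a : T) :
  \sum_(x | P x) (a == x)%:R = (P a)%:R :> R.
Proof.
rewrite big_mkcond (bigD1 a) //= eqxx big1 ?addr0 => [|x /negbTE].
  by case: (P a).
by rewrite eq_sym => ->; case: (P x).
Qed.

Lemma sum_predC1_ord1 {n} (r : 'I_n) : \sum_(v | v != r) 1 = n%:R - 1 :> rat.
Proof.
rewrite sumr_const cardC1 card_ord.
by case: n r => [[]|n] // r; rewrite mulrSr addrK.
Qed.

Section Tree.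
Variables (n : nat) (par : 'I_n -> 'I_n) (r : 'I_n).

Definition edge_dev (w : {perm 'I_n}) v := centered_lt (w (par v)) (w v).

Definition edge_cov u v : rat :=
  (par u == par v)%:R + 2 * (u == v)%:R - (par u == v)%:R - (par v == u)%:R.

Lemma edge_covC u v : edge_cov u v = edge_cov v u.
Proof. by rewrite /edge_cov [par v == par u]eq_sym [v == u]eq_sym addrAC. Qed.

Lemma downdegE x :
  (downdeg par r x)%:R = \sum_(u | u != r) (par u == x)%:R :> rat.
Proof. exact: card_set_andE. Qed.

Lemma sum_downdeg_sqr : \sum_x (downdeg par r x)%:R ^+ 2 =
  \sum_(u | u != r) \sum_(v | v != r) (par u == par v)%:R :> rat.
Proof.
under eq_bigr do rewrite expr2 downdegE big_distrlr /=.
rewrite exchange_big; apply: eq_bigr => u _ /=.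
rewrite exchange_big; apply: eq_bigr => v _ /=.
under eq_bigr do rewrite mulr_natr mulrb.
by rewrite -big_mkcond sum_eq_cond eq_sym.
Qed.

Lemma sum_nonroot_par_eq :
  \sum_(u | u != r) \sum_(v | v != r) (par u == v)%:R
  = n%:R - 1 - (downdeg par r r)%:R :> rat.
Proof.
rewrite downdegE -(sum_predC1_ord1 r) -sumrB; apply: eq_bigr => u _.
by rewrite sum_eq_cond; case: eqP.
Qed.

Lemma sum_edge_cov : \sum_(u | u != r) \sum_(v | v != r) edge_cov u v =
  2 * (downdeg par r r)%:R + \sum_x (downdeg par r x)%:R ^+ 2.
Proof.
have sum_diag : \sum_(u | u != r) \sum_(v | v != r) (u == v)%:R = n%:R - 1 :> rat.
  by rewrite -(sum_predC1_ord1 r); apply: eq_bigr => u ur; rewrite sum_eq_cond ur.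
rewrite /edge_cov; under eq_bigr do rewrite !sumrB big_split /= -mulr_sumr.
rewrite !sumrB big_split /= -mulr_sumr sum_downdeg_sqr sum_diag.
rewrite sum_nonroot_par_eq [X in _ - X = _]exchange_big sum_nonroot_par_eq.
by ring.
Qed.

Lemma des_centered w :
  (des par r w)%:R = \sum_(v | v != r) edge_dev w v + (n%:R - 1) / 2.
Proof.
rewrite /des card_set_andE -(sum_predC1_ord1 r) mulr_suml -big_split /=.
by apply: eq_bigr => v _; rewrite /edge_dev /centered_lt; ring.
Qed.

Hypothesis tree : is_rooted_tree par r.

Lemma tree_iter_neq k u : u != r -> iter k.+1 par u != u.
Proof.
(* A cycle through u is periodic, yet reaches the fixed point r. *)
move=> /eqP ur; apply/eqP => cyc; apply: ur.
case: tree => par_r /(_ u) [m reach_r].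
have periodic j : iter (j * k.+1) par u = u.
  by elim: j => [|j IH] //; rewrite mulSn iterD IH.
rewrite -(periodic m) -(subnK (leq_pmulr m (ltn0Sn k))) iterD reach_r.
exact: iter_fix.
Qed.

Lemma sum_perm_edge_dev v : v != r -> \sum_(w : {perm 'I_n}) edge_dev w v = 0.
Proof. by move=> vr; apply: sum_perm_centered_lt; apply: tree_iter_neq 0 _ vr. Qed.

Lemma edge_cov_path u : u != r -> par u != r -> edge_cov u (par u) = -1.
Proof.
move=> ur pur; have /= pu := tree_iter_neq 0 _ ur.
have /= ppu_u := tree_iter_neq 1 _ ur; have /= ppu := tree_iter_neq 0 _ pur.
rewrite /edge_cov eqxx eq_sym (negbTE ppu) (negbTE ppu_u) eq_sym (negbTE pu) /=.
by field.
Qed.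

Lemma sum_perm_edge_dev_mul_path u : u != r -> par u != r ->
  \sum_(w : {perm 'I_n}) edge_dev w u * edge_dev w (par u) = - n`!%:R / 12.
Proof.
move=> ur pur; have pu := tree_iter_neq 0 _ ur; have ppu := tree_iter_neq 0 _ pur.
rewrite mulNr -(sum_perm_centered_lt_common _ (par u) u (par (par u))) //.
- rewrite -sumrN; apply: eq_bigr => w _.
  by rewrite /edge_dev [X in _ * X]centered_ltC ?mulrN // perm_val_neq 1?eq_sym.
- by rewrite eq_sym.
- by rewrite eq_sym (tree_iter_neq 1).
Qed.

Lemma sum_perm_edge_dev_mul u v : u != r -> v != r ->
  \sum_(w : {perm 'I_n}) edge_dev w u * edge_dev w v = n`!%:R * edge_cov u v / 12.
Proof.
move=> ur vr; have /= pu := tree_iter_neq 0 _ ur.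
have /= pv := tree_iter_neq 0 _ vr; have [<-|uv] := eqVneq u v.
  under eq_bigr do rewrite -expr2 centered_lt_sqr.
  by rewrite sumr_const card_Sn -mulr_natr /edge_cov !eqxx (negbTE pu) /=; field.
have [ppuv|ppuv] := eqVneq (par u) (par v).
  have puv : par u != v by rewrite ppuv.
  rewrite /edge_dev /edge_cov -ppuv sum_perm_centered_lt_common //.
  by rewrite eqxx (negbTE uv) (negbTE puv) (negbTE pu) /=; field.
have [puv|puv] := eqVneq (par u) v.
  by subst v; rewrite sum_perm_edge_dev_mul_path // edge_cov_path //; field.
have [pvu|pvu] := eqVneq (par v) u.
  subst u; rewrite edge_covC; under eq_bigr do rewrite mulrC.
  by rewrite sum_perm_edge_dev_mul_path // edge_cov_path //; field.
have upv : u != par v by rewrite eq_sym.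
rewrite /edge_dev sum_perm_centered_lt_disjoint // /edge_cov.
by rewrite (negbTE ppuv) (negbTE uv) (negbTE puv) (negbTE pvu) /=; field.
Qed.

Let fact_neq0 : n`!%:R != 0 :> rat.
Proof. by rewrite pnatr_eq0 -lt0n fact_gt0. Qed.

Lemma des_meanE : des_mean par r = (n%:R - 1) / 2.
Proof.
rewrite /des_mean; under eq_bigr do rewrite des_centered.
rewrite big_split /= sumr_const card_Sn exchange_big /= big1 => [|v vr].
  by rewrite add0r -mulr_natr; field.
by rewrite sum_perm_edge_dev.
Qed.

Lemma des_varE : des_var par r =
  (2 * (downdeg par r r)%:R + \sum_x (downdeg par r x)%:R ^+ 2) / 12.
Proof.
rewrite /des_var des_meanE.
under eq_bigr do rewrite des_centered addrK expr2 big_distrlr /=.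
rewrite exchange_big; under eq_bigr do rewrite exchange_big.
under eq_bigr => u ur do under eq_bigr => v vr do rewrite sum_perm_edge_dev_mul //.
under eq_bigr do rewrite -mulr_suml -mulr_sumr.
by rewrite -mulr_suml -mulr_sumr sum_edge_cov; field.
Qed.

End Tree.

Theorem lemma3p3 (n : nat) (par : 'I_n -> 'I_n) (r : 'I_n) :
  is_rooted_tree par r ->
  des_mean par r = ((n%:R - 1) / 2 : rat) /\
  des_var par r =
    ((2 * (downdeg par r r)%:R
      + \sum_(v : 'I_n) ((downdeg par r v)%:R) ^+ 2) / 12 : rat).
Proof. by move=> tree; split; [apply: des_meanE | apply: des_varE]. Qed.
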